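(* Assume $\mathcal S$ and $\mathcal A$ are finite. For $\sigma>0$ let $\pi^*_\sigma$ be an optimal policy of $\mathcal M_\sigma$ (every action in $\mathrm{supp}(\pi^*_\sigma(\cdot\mid s))$ maximizes $Q^*_\sigma(s,\cdot)$, the optimal $Q$-function of $\mathcal M_\sigma$). Then for every $\epsilon>0$ there exists $\sigma'>0$ such that for all $0<\sigma<\sigma'$, all $s\in\mathcal S$ and all $a'\in\mathrm{supp}(\pi^*_\sigma(\cdot\mid s))$, $$\min_{a\in\mathrm{supp}(p_D(\cdot\mid s))}\|a'-a\|_2^2<\epsilon .$$
   Context: Setting: finite state space $\mathcal S$, finite action space $\mathcal A\subset\mathbb R^n$, discount $\gamma\in(0,1)$, reward $R(s,a)$. Dataset distribution $p_D$: action distributions $p_D(a\mid s)$ with support $\mathrm{supp}(p_D(\cdot\mid s))\subseteq\mathcal A$ (the dataset actions at $s$) and transitions $p_D(s'\mid s,a)$. A noise distribution $q_\sigma(\cdot\mid a)$ ($a\in\mathcal A$, $\sigma>0$) is a probability mass function positive on $\mathcal A$ satisfying: for all $a,a_1,a_2\in\mathcal A$, if $\|a_1-a\|_2^2>\|a_2-a\|_2^2$ then $q_\sigma(a\mid a_1)/q_\sigma(a\mid a_2)\to0$ as $\sigma\to0^+$, and if equal then the ratio $\to1$. For $\sigma>0$, $\mathcal M_\sigma=(\mathcal S,\mathcal A,R_\sigma,P_\sigma,\gamma)$ is the Noisy Action MDP with $p_D(a'\mid s,a,\sigma)=q_\sigma(a'\mid a)p_D(a\mid s)/\sum_b q_\sigma(a'\mid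 b)p_D(b\mid s)$, $P_\sigma(s'\mid s,a')=\sum_a p_D(s'\mid s,a)p_D(a'\mid s,a,\sigma)$, $R_\sigma(s,a')=\sum_a p_D(a'\mid s,a,\sigma)(R(s,a)-\|a-a'\|_2^2)$. *)

From HB Require Import structures.
From mathcomp Require Import all_boot all_order all_algebra.
From mathcomp Require Import all_classical all_reals all_analysis.
Set Implicit Arguments. Unset Strict Implicit. Unset Printing Implicit Defensive.
Import Order.TTheory GRing.Theory Num.Theory.
Import numFieldNormedType.Exports.
Local Open Scope classical_set_scope.
Local Open Scope ring_scope.

Section NoisyMDP.
Variables (R : realType) (n : nat) (S A : finType).

Definition sqdist (emb : A -> 'rV[R]_n) (a b : A) : R :=
  \sum_(i < n) (emb a 0 i - emb b 0 i) ^+ 2.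

(* maximum of a function over a finite type (0 if the type is empty) *)
Definition fmax (T : finType) (f : T -> R) : R :=
  match [pick x : T] with
  | Some x0 => \big[Num.max/f x0]_(x : T) f x
  | None => 0
  end.

(* minimum of f over {x | P x} (0 if that set is empty) *)
Definition fmin_over (T : finType) (P : pred T) (f : T -> R) : R :=
  match [pick x | P x] with
  | Some x0 => \big[Num.min/f x0]_(x | P x) f x
  | None => 0
  end.

Definition is_pmf (T : finType) (p : T -> R) : Prop :=
  (forall x, 0 <= p x) /\ \sum_(x : T) p x = 1.

(* noise distribution q sigma a' a = q_sigma(a' | a) *)
Definition is_noise (emb : A -> 'rV[R]_n) (q : R -> A -> A -> R) : Prop :=
  (forall sigma, 0 < sigma -> forall a, (forall a', 0 < q sigma a' a)
                                        /\ \sum_(a' : A) q sigma a' a = 1) /\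
  (forall a a1 a2, sqdist emb a2 a < sqdist emb a1 a ->
     (fun sigma => q sigma a a1 / q sigma a a2) @ 0^'+ --> (0 : R)) /\
  (forall a a1 a2, sqdist emb a1 a = sqdist emb a2 a ->
     (fun sigma => q sigma a a1 / q sigma a a2) @ 0^'+ --> (1 : R)).

Definition post (q : R -> A -> A -> R) (pDa : S -> A -> R) (sigma : R)
    (s : S) (a' a : A) : R :=
  q sigma a' a * pDa s a / \sum_(b : A) q sigma a' b * pDa s b.

Definition Psigma (q : R -> A -> A -> R) (pDa : S -> A -> R)
    (pDs : S -> A -> S -> R) (sigma : R) (s : S) (a' : A) (s' : S) : R :=
  \sum_(a : A) pDs s a s' * post q pDa sigma s a' a.

Definition Rsigma (emb : A -> 'rV[R]_n) (q : R -> A -> A -> R)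
    (pDa : S -> A -> R) (Rw : S -> A -> R) (sigma : R) (s : S) (a' : A) : R :=
  \sum_(a : A) post q pDa sigma s a' a * (Rw s a - sqdist emb a a').

(* Q is the optimal Q-function of M_sigma: the (unique, by contraction)
   solution of the Bellman optimality equation. *)
Definition is_optimal_Q (emb : A -> 'rV[R]_n) (q : R -> A -> A -> R)
    (pDa : S -> A -> R) (pDs : S -> A -> S -> R) (Rw : S -> A -> R)
    (gamma sigma : R) (Q : S -> A -> R) : Prop :=
  forall s a', Q s a' = Rsigma emb q pDa Rw sigma s a'
     + gamma * \sum_(s' : S) Psigma q pDa pDs sigma s a' s' * fmax (Q s').

End NoisyMDP.

From HB Require Import structures.
From mathcomp Require Import all_boot all_order all_algebra.
From mathcomp Require Import all_classical all_reals all_analysis.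
From mathcomp Require Import ring lra.
Set Implicit Arguments. Unset Strict Implicit. Unset Printing Implicit Defensive.
Import Order.TTheory GRing.Theory Num.Theory.
Import numFieldNormedType.Exports.
Local Open Scope classical_set_scope.
Local Open Scope ring_scope.

(* Write H(s,a) = R(s,a) + gamma E[max Q_sigma(s',.)] for the Bellman target of a
   dataset action a.  The Bellman equation of the noisy MDP says that Q_sigma(s,x)
   is the posterior average of H(s,a) - |a - x|^2 over dataset actions a, and
   Q_sigma is bounded uniformly in sigma.  If x is at squared distance >= eps from
   every dataset action, then Q_sigma(s,x) <= max_a H(s,a) - eps.  The maximiser b
   is itself a dataset action, and as sigma -> 0 the posterior at b concentrates
   on b, because q_sigma(b|a)/q_sigma(b|b) -> 0 for a <> b; hence Q_sigma(s,b)
   tends to H(s,b) and eventually beats Q_sigma(s,x), so x cannot be optimal. *)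

Section SquaredDistance.
Variables (R : realType) (n : nat) (A : finType) (emb : A -> 'rV[R]_n).

Lemma sqdist_ge0 a b : 0 <= sqdist emb a b.
Proof. by apply: sumr_ge0 => i _; rewrite sqr_ge0. Qed.

Lemma sqdistC a b : sqdist emb a b = sqdist emb b a.
Proof. by apply: eq_bigr => i _; rewrite -sqrrN opprB. Qed.

Lemma sqdistxx a : sqdist emb a a = 0.
Proof. by apply: big1 => i _; rewrite subrr expr0n. Qed.

Lemma sqdist_gt0 a b : injective emb -> a != b -> 0 < sqdist emb a b.
Proof.
move=> emb_inj; apply: contraNT; rewrite lt_def sqdist_ge0 andbT negbK.
move=> /eqP /psumr_eq0P coord0; apply/eqP/emb_inj/rowP => i.
apply/eqP; rewrite -subr_eq0 -sqrf_eq0; apply/eqP/coord0 => // j _.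
exact: sqr_ge0.
Qed.

End SquaredDistance.

Section FiniteExtrema.
Variables (R : realType) (T : finType).

Lemma fmax_norm_le (f : T -> R) m :
  0 <= m -> (forall x, `|f x| <= m) -> `|fmax f| <= m.
Proof.
move=> m_ge0 f_le; rewrite /fmax; case: pickP => [x0 _|_]; last by rewrite normr0.
by apply: (big_ind (fun v => `|v| <= m)) => // u v; rewrite /Num.max; case: ifP.
Qed.

Lemma fmin_over_le (P : pred T) (f : T -> R) x : P x -> fmin_over P f <= f x.
Proof.
move=> Px; rewrite /fmin_over; case: pickP => [x0 _|/(_ x)]; last by rewrite Px.
exact: bigmin_le_cond.
Qed.

End FiniteExtrema.

Section Pmf.
Variables (R : realType) (T : finType) (p : T -> R).
Hypothesis p_pmf : is_pmf p.

Lemma pmf_le1 x : p x <= 1.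
Proof.
have [p_ge0 <-] := p_pmf.
by rewrite (bigD1 x) //= lerDl sumr_ge0.
Qed.

Lemma pmf_support : exists x, 0 < p x.
Proof.
have [p_ge0 p_sum1] := p_pmf.
apply/existsP; apply: contraT; rewrite negb_exists => /forallP p_le0.
have : \sum_x p x = 0.
  by apply: big1 => x _; apply/eqP; rewrite eq_le p_ge0 andbT leNgt p_le0.
by rewrite p_sum1 => /eqP; rewrite oner_eq0.
Qed.

Lemma pmf_expect_le (f : T -> R) u :
  (forall x, 0 < p x -> f x <= u) -> \sum_x p x * f x <= u.
Proof.
have [p_ge0 p_sum1] := p_pmf.
move=> f_le; rewrite -[leRHS]mul1r -p_sum1 mulr_suml; apply: ler_sum => x _.
have [px_gt0|px_le0] := ltP 0 (p x); first by rewrite ler_pM2l // f_le.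
suff -> : p x = 0 by rewrite !mul0r.
by apply/eqP; rewrite eq_le px_le0 p_ge0.
Qed.

Lemma pmf_expect_norm_le (f : T -> R) m :
  (forall x, `|f x| <= m) -> `|\sum_x p x * f x| <= m.
Proof.
have [p_ge0 p_sum1] := p_pmf.
move=> f_le; apply: (le_trans (ler_norm_sum _ _ _)).
rewrite -[leRHS]mul1r -p_sum1 mulr_suml; apply: ler_sum => x _.
by rewrite normrM ger0_norm //; apply: ler_wpM2l.
Qed.

End Pmf.

Section Posterior.
Variables (R : realType) (S A : finType) (q : R -> A -> A -> R) (pDa : S -> A -> R).
Variables (sigma : R) (s : S).
Hypothesis pDa_pmf : is_pmf (pDa s).
Hypothesis q_gt0 : forall x a, 0 < q sigma x a.

Let normalizer_ge x b : q sigma x b * pDa s b <= \sum_c q sigma x c * pDa s c.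
Proof.
have [pDa_ge0 _] := pDa_pmf.
rewrite (bigD1 b) //= lerDl; apply: sumr_ge0 => c _.
exact: mulr_ge0 (ltW (q_gt0 x c)) (pDa_ge0 c).
Qed.

Let normalizer_gt0 x : 0 < \sum_c q sigma x c * pDa s c.
Proof.
have [b pDa_b_gt0] := pmf_support pDa_pmf.
exact: lt_le_trans (mulr_gt0 (q_gt0 x b) pDa_b_gt0) (normalizer_ge x b).
Qed.

Lemma post_pmf x : is_pmf (post q pDa sigma s x).
Proof.
have [pDa_ge0 _] := pDa_pmf.
split=> [a|]; last by rewrite -mulr_suml divff // gt_eqF.
exact: divr_ge0 (mulr_ge0 (ltW (q_gt0 x a)) (pDa_ge0 a)) (ltW (normalizer_gt0 x)).
Qed.

Lemma post_gt0_support x a : 0 < post q pDa sigma s x a -> 0 < pDa s a.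
Proof.
have [pDa_ge0 _] := pDa_pmf.
apply: contraTT; rewrite -!leNgt /post => pDa_a_le0.
have -> : pDa s a = 0 by apply/eqP; rewrite eq_le pDa_a_le0 pDa_ge0.
by rewrite mulr0 mul0r.
Qed.

Lemma post_le_ratio x a b :
  0 < pDa s b -> post q pDa sigma s x a <= q sigma x a / q sigma x b / pDa s b.
Proof.
move=> pDa_b_gt0; rewrite /post -[_ / _ / pDa s b]mulrA -invfM.
apply: (@le_trans _ _ (q sigma x a / \sum_c q sigma x c * pDa s c)).
  rewrite ler_pM2r ?invr_gt0 //.
  exact: ler_piMr (ltW (q_gt0 x a)) (pmf_le1 pDa_pmf a).
by rewrite ler_pM2l // lef_pV2 ?posrE ?mulr_gt0.
Qed.

End Posterior.

Section BellmanOptimality.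
Variables (R : realType) (n : nat) (S A : finType) (emb : A -> 'rV[R]_n).
Variables (q : R -> A -> A -> R) (pDa : S -> A -> R) (pDs : S -> A -> S -> R).
Variables (Rw : S -> A -> R) (gamma sigma : R) (Q : S -> A -> R).
Hypothesis pDa_pmf : forall s, is_pmf (pDa s).
Hypothesis pDs_pmf : forall s a, is_pmf (pDs s a).
Hypothesis q_gt0 : forall x a, 0 < q sigma x a.
Hypothesis Q_opt : is_optimal_Q emb q pDa pDs Rw gamma sigma Q.

Definition data_backup s a := Rw s a + gamma * \sum_s' pDs s a s' * fmax (Q s').

Lemma Q_eq_post_expect s x :
  Q s x = \sum_a post q pDa sigma s x a * (data_backup s a - sqdist emb a x).
Proof.
rewrite Q_opt /Rsigma /Psigma /data_backup.
under [X in gamma * X]eq_bigr do rewrite mulr_suml.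
rewrite exchange_big mulr_sumr -big_split; apply: eq_bigr => a _ /=.
suff -> : \sum_s' pDs s a s' * post q pDa sigma s x a * fmax (Q s') =
    post q pDa sigma s x a * \sum_s' pDs s a s' * fmax (Q s') by ring.
by rewrite mulr_sumr; apply: eq_bigr => s' _; rewrite mulrAC mulrC.
Qed.

Lemma Q_le_of_support s x u :
  (forall a, 0 < pDa s a -> data_backup s a - sqdist emb a x <= u) -> Q s x <= u.
Proof.
move=> backup_le; rewrite Q_eq_post_expect.
apply: (pmf_expect_le (post_pmf (pDa_pmf s) q_gt0 x)) => a /post_gt0_support a_supp.
exact/backup_le/a_supp.
Qed.

Lemma data_backup_sub_norm_le c m s a x :
  0 <= gamma -> `|Rw s a - sqdist emb a x| <= c -> (forall s', `|fmax (Q s')| <= m) ->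
  `|data_backup s a - sqdist emb a x| <= c + gamma * m.
Proof.
move=> gamma_ge0 Rw_le fmax_le; rewrite /data_backup addrAC.
apply: le_trans (ler_normD _ _) _; apply: lerD => //.
by rewrite normrM ger0_norm //; apply/ler_wpM2l/pmf_expect_norm_le.
Qed.

Lemma Q_norm_le c :
  0 <= gamma < 1 -> (forall s a x, `|Rw s a - sqdist emb a x| <= c) ->
  forall s x, `|Q s x| <= c / (1 - gamma).
Proof.
move=> /andP[gamma_ge0 gamma_lt1] Rw_le s x.
have c_ge0 : 0 <= c := le_trans (normr_ge0 _) (Rw_le s x x).
pose m := \big[Num.max/0]_(i : S * A) `|Q i.1 i.2|.
have Q_le_m s' x' : `|Q s' x'| <= m.
  exact: (le_bigmax 0 (fun i : S * A => `|Q i.1 i.2|) (s', x')).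
have m_ge0 : 0 <= m := bigmax_ge_id _ _ _ _.
have Q_le s' x' : `|Q s' x'| <= c + gamma * m.
  rewrite Q_eq_post_expect; apply: (pmf_expect_norm_le (post_pmf _ q_gt0 _)) => // a.
  by apply: data_backup_sub_norm_le => // s''; apply: fmax_norm_le.
have m_le : m <= c + gamma * m.
  by apply: bigmax_le => [|i _]; [rewrite addr_ge0 ?mulr_ge0 | exact: Q_le].
apply: le_trans (Q_le_m s x) _.
by rewrite ler_pdivlMr ?subr_gt0 //; nra.
Qed.

Lemma data_backup_sub_Q_le s b L :
  (forall a, `|data_backup s a - sqdist emb a b| <= L) ->
  data_backup s b - Q s b <= L *+ 2 * \sum_(a | a != b) post q pDa sigma s b a.
Proof.
move=> backup_le; have [post_ge0 post_sum1] := post_pmf (pDa_pmf s) q_gt0 b.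
rewrite -[data_backup s b]mul1r -post_sum1 mulr_suml Q_eq_post_expect -sumrB.
rewrite (bigD1 b) //= sqdistxx subr0 subrr add0r mulr_sumr.
apply: ler_sum => a _; rewrite -mulrBr mulrC; apply: ler_wpM2r => //.
have := backup_le a; have := backup_le b; rewrite sqdistxx subr0 !ler_norml mulr2n.
lra.
Qed.

End BellmanOptimality.

Lemma noise_gt0 (R : realType) (n : nat) (A : finType) (emb : A -> 'rV[R]_n)
    (q : R -> A -> A -> R) :
  is_noise emb q -> forall sigma, 0 < sigma -> forall x a, 0 < q sigma x a.
Proof. by move=> [q_pmf _] sigma sigma_gt0 x a; have [->] := q_pmf sigma sigma_gt0 a. Qed.

Lemma near_at_right0_interval (R : realType) (P : R -> Prop) :
  (\forall x \near 0^'+, P x) -> exists2 e : R, 0 < e & forall x, 0 < x -> x < e -> P x.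
Proof.
move=> /nbhs_ballP [e e_gt0 ball_P]; exists e => // x x_gt0 x_lt_e.
by apply: ball_P => //; rewrite /ball /= sub0r normrN gtr0_norm.
Qed.

Section SmallNoise.
Variables (R : realType) (n : nat) (S A : finType) (emb : A -> 'rV[R]_n).
Variables (q : R -> A -> A -> R) (pDa : S -> A -> R) (pDs : S -> A -> S -> R).
Variables (Rw : S -> A -> R) (gamma : R) (Q : R -> S -> A -> R).
Hypothesis emb_inj : injective emb.
Hypothesis pDa_pmf : forall s, is_pmf (pDa s).
Hypothesis pDs_pmf : forall s a, is_pmf (pDs s a).
Hypothesis q_noise : is_noise emb q.
Hypothesis gamma_range : 0 <= gamma < 1.
Hypothesis Q_opt : forall sigma, 0 < sigma ->
  is_optimal_Q emb q pDa pDs Rw gamma sigma (Q sigma).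

Let q_gt0 := noise_gt0 q_noise.

Lemma post_offdiag_cvg0 s b : 0 < pDa s b ->
  \sum_(a | a != b) post q pDa sigma s b a @[sigma --> 0^'+] --> 0.
Proof.
move=> pDa_b_gt0.
suff : \sum_(a | a != b) post q pDa sigma s b a @[sigma --> 0^'+] -->
    \sum_(a | a != b) (0 : R) by rewrite big1.
apply: cvg_big => [|a ab]; first exact: add_continuous.
have [_ [ratio_cvg0 _]] := q_noise.
have {}ratio_cvg0 : (fun sigma => q sigma b a / q sigma b b) @ 0^'+ --> 0.
  by apply: ratio_cvg0; rewrite sqdistxx sqdist_gt0.
apply: (@squeeze_cvgr _ _ _ _ (fun=> 0) (fun sigma => q sigma b a / q sigma b b / pDa s b)).
- near=> sigma.
  have sigma_gt0 : 0 < sigma by near: sigma; exact: nbhs_right_gt.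
  have [post_ge0 _] := post_pmf (pDa_pmf s) (q_gt0 sigma_gt0) b.
  by rewrite post_ge0 post_le_ratio //; exact: q_gt0.
- exact: cvg_cst.
- by rewrite -[X in _ --> X](mul0r (pDa s b)^-1); apply: cvgMl.
Unshelve. all: by end_near.
Qed.

Lemma data_backup_sub_bounded : exists L, forall sigma, 0 < sigma -> forall s a x,
  `|data_backup pDs Rw gamma (Q sigma) s a - sqdist emb a x| <= L.
Proof.
pose c := \big[Num.max/0]_(i : S * A * A) `|Rw i.1.1 i.1.2 - sqdist emb i.1.2 i.2|.
have Rw_le s a x : `|Rw s a - sqdist emb a x| <= c.
  exact: (le_bigmax 0 (fun i : S * A * A => `|Rw i.1.1 i.1.2 - sqdist emb i.1.2 i.2|) (s, a, x)).
have c_ge0 : 0 <= c := bigmax_ge_id _ _ _ _.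
have [gamma_ge0 gamma_lt1] := andP gamma_range.
exists (c + gamma * (c / (1 - gamma))) => sigma sigma_gt0 s a x.
apply: data_backup_sub_norm_le => // s'.
apply: fmax_norm_le => [|x']; first by rewrite divr_ge0 // subr_ge0 ltW.
exact: (Q_norm_le pDa_pmf pDs_pmf (q_gt0 sigma_gt0) (Q_opt sigma_gt0) gamma_range Rw_le).
Qed.

Lemma near0_Q_gt_data_backup eps : 0 < eps ->
  \forall sigma \near 0^'+, forall s b, 0 < pDa s b ->
    data_backup pDs Rw gamma (Q sigma) s b - eps < Q sigma s b.
Proof.
move=> eps_gt0; have [L backup_le] := data_backup_sub_bounded.
suff : \forall sigma \near 0^'+, forall i : S * A, 0 < pDa i.1 i.2 ->
    data_backup pDs Rw gamma (Q sigma) i.1 i.2 - eps < Q sigma i.1 i.2.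
  by apply: filterS => sigma near_sigma s b; exact: (near_sigma (s, b)).
apply: filter_forall => -[s b] /=.
have [pDa_b_gt0|_] := ltP 0 (pDa s b); last exact: nearW.
have mass_cvg : L *+ 2 * \sum_(a | a != b) post q pDa sigma s b a
    @[sigma --> 0^'+] --> 0.
  by rewrite -[X in _ --> X](mulr0 (L *+ 2)); apply: cvgMr; exact: post_offdiag_cvg0.
near=> sigma => _.
have sigma_gt0 : 0 < sigma by near: sigma; exact: nbhs_right_gt.
have mass_lt : L *+ 2 * \sum_(a | a != b) post q pDa sigma s b a < eps.
  by near: sigma; exact: cvgr_lt mass_cvg _ eps_gt0.
have := data_backup_sub_Q_le pDa_pmf (q_gt0 sigma_gt0) (Q_opt sigma_gt0)
  (fun a => backup_le sigma sigma_gt0 s a b).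
lra.
Unshelve. all: by end_near.
Qed.

End SmallNoise.

Theorem mainTheorem7 (R : realType) (n : nat) (S A : finType)
  (emb : A -> 'rV[R]_n) (emb_inj : injective emb)
  (gamma : R) (hgamma : 0 < gamma < 1)
  (Rw : S -> A -> R)
  (pDa : S -> A -> R) (hpDa : forall s, is_pmf (pDa s))
  (pDs : S -> A -> S -> R) (hpDs : forall s a, is_pmf (pDs s a))
  (q : R -> A -> A -> R) (hq : is_noise emb q)
  (Q : R -> S -> A -> R)
  (hQ : forall sigma, 0 < sigma -> is_optimal_Q emb q pDa pDs Rw gamma sigma (Q sigma))
  (pi : R -> S -> A -> R)
  (hpi_pmf : forall sigma, 0 < sigma -> forall s, is_pmf (pi sigma s))
  (hpi_opt : forall sigma, 0 < sigma -> forall s a', 0 < pi sigma s a' ->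
               forall b, Q sigma s b <= Q sigma s a') :
  forall eps : R, 0 < eps ->
  exists sigma' : R, 0 < sigma' /\
    forall sigma, 0 < sigma -> sigma < sigma' ->
    forall s a', 0 < pi sigma s a' ->
      fmin_over (fun a => 0 < pDa s a) (fun a => sqdist emb a' a) < eps.
Proof.
move=> eps eps_gt0.
have gamma_range : 0 <= gamma < 1 by case/andP: hgamma => /ltW-> ->.
have [e e_gt0 Q_near_backup] := near_at_right0_interval
  (near0_Q_gt_data_backup emb_inj hpDa hpDs hq gamma_range hQ eps_gt0).
exists e; split=> // sigma sigma_gt0 sigma_lt_e s a' pi_a'_gt0.
rewrite ltNge; apply/negP => a'_far.
set H := data_backup pDs Rw gamma (Q sigma) s.
have [b0 b0_supp] := pmf_support (hpDa s).
have [b b_supp b_max] := @arg_maxP _ _ _ b0 (fun a => 0 < pDa s a) H b0_supp.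
have Q_a'_le : Q sigma s a' <= H b - eps.
  apply: (Q_le_of_support hpDa (noise_gt0 hq sigma_gt0) (hQ sigma sigma_gt0)).
  move=> a a_supp; rewrite sqdistC.
  exact: lerB (b_max a a_supp) (le_trans a'_far (fmin_over_le _ a_supp)).
have := Q_near_backup sigma sigma_gt0 sigma_lt_e s b b_supp.
have := hpi_opt sigma sigma_gt0 s a' pi_a'_gt0 b.
rewrite -/H; lra.
Qed.
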